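(* Assume $0<q_{00}<1$, $\theta_1>0$, that $p_{00}$ and $p_{10}$ have finite moment generating functions in a neighbourhood of $0$, and that $M$ is diagonalizable. Let $\mu_t=\mathbb E[Y_t]$ and, for integers $k\ge1$, $\mu^0_k=\frac{\theta_1}{q_{00}}(M^k)_{00}$ (the expectation of $Y_k$ when $\nu=e_0$). Then the covariance matrix $\Sigma_{tt'}=\mathrm{Cov}(Y_t,Y_{t'})$ satisfies, for $t=1,\dots,T$, $$\Sigma_{tt}=\big(\theta_1(\theta_3+1)+1-\mu_t\big)\mu_t,$$ and for $1\le t'<t\le T$, $$\Sigma_{tt'}=\left[\Big(\theta_2-q_{00}\frac{1-\theta_2}{1-q_{00}}\Big)\mu^0_{t-t'}+\frac{1-\theta_2}{1-q_{00}}\mu^0_{t-t'+1}-\mu_t\right]\mu_{t'}.$$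
   Context: Hidden two-timescale Markov model (HTMM). Fix integers $r\ge 1$, $T\ge 1$ and $\mathcal S=\{0,1,\dots,r\}$. Let $q_{xz}\in[0,1]$ for $x\in\mathcal S$, $z\in\{0,\dots,r-1\}$, with $\sum_{x}q_{xz}=1$ for each such $z$. Define column-stochastic matrices $M^{\ell}$, $M^{s}$ indexed by $\mathcal S$: column $0$ of $M^\ell$ is $e_0$, column $r$ of $M^\ell$ is $e_r$, $M^\ell_{xz}=q_{xz}$ for $1\le z\le r-1$; column $0$ of $M^s$ is $(q_{00},\dots,q_{r0})^{\mathrm T}$ and $M^s_{xz}=\delta_{xz}$ for $z\ge 1$. Set $M=M^sM^\ell$. Let $p_{00},p_{10}$ be probability distributions on $\mathbb N_0$; put $p_{x0}:=p_{10}$ for $x\ge1$ and $p_{xx'}:=\delta_0$ for $x'\ne0$. Let $\nu$ be a probability vector on $\mathcal S$. The HTMM is the random vector $(X_0,X'_1,X_1,Y_1,\dots,X'_T,X_T,Y_T)$ with joint law $\mathbb P(X_0=x_0,X'_t=x'_t,X_t=x_t,Y_t=y_t,1\le t\le T)=\nu_{x_0}\prod_{t=1}^T M^\ell_{x'_tx_{t-1}}M^s_{x_tx'_t}p_{x_tx'_t}(y_t)$. Inner-model parameters (independent of $t$): $\theta_1=\mathbb E[Y_t\mid X'_t=0]$, $\theta_2=q_{00}\,\mathbb E[Y_t\mid X'_t=X_t=0]/\theta_1$, $\theta_3=\mathrm{Var}[Y_t\mid X'_t=0]/\theta_1^2-1/\theta_1$. *)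

From Stdlib Require Import Reals Lra Lia Arith ClassicalEpsilon.
Open Scope R_scope.

(** Generic limit of a real sequence (chosen by classical choice;
    meaningful when the sequence converges). *)
Definition Rlim (u : nat -> R) : R :=
  epsilon (inhabits 0) (fun l => Un_cv u l).

Definition Rseries (f : nat -> R) : R := Rlim (fun n => sum_f_R0 f n).

Definition is_prob_nat (p : nat -> R) : Prop :=
  (forall y, 0 <= p y) /\ infinite_sum p 1.

Definition finite_mgf_near0 (p : nat -> R) : Prop :=
  exists delta, 0 < delta /\
    forall s, Rabs s < delta ->
      exists l, infinite_sum (fun y => p y * exp (s * INR y)) l.

Definition mean_nat (p : nat -> R) : R := Rseries (fun y => INR y * p y).
Definition mom2_nat (p : nat -> R) : R := Rseries (fun y => INR y ^ 2 * p y).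

Definition kd (i j : nat) : R := if Nat.eqb i j then 1 else 0.

(** Square matrices indexed by S = {0,...,r}, as functions nat -> nat -> R. *)
Definition mmul (r : nat) (A B : nat -> nat -> R) : nat -> nat -> R :=
  fun i j => sum_f_R0 (fun k => A i k * B k j) r.

Fixpoint mpow (r : nat) (A : nat -> nat -> R) (k : nat) : nat -> nat -> R :=
  match k with
  | O => kd
  | S k' => mmul r A (mpow r A k')
  end.

Definition Ml (r : nat) (q : nat -> nat -> R) : nat -> nat -> R :=
  fun x z => if Nat.eqb z O then kd x O
             else if Nat.eqb z r then kd x r
             else q x z.

Definition Ms (q : nat -> nat -> R) : nat -> nat -> R :=
  fun x z => if Nat.eqb z O then q x O else kd x z.

Definition Mmat (r : nat) (q : nat -> nat -> R) : nat -> nat -> R :=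
  mmul r (Ms q) (Ml r q).

Definition pem (p00 p10 : nat -> R) (x x' : nat) : nat -> R :=
  fun y => if Nat.eqb x' O then (if Nat.eqb x O then p00 y else p10 y)
           else kd y O.

Definition Cx : Type := (R * R)%type.
Definition Cadd (a b : Cx) : Cx := (fst a + fst b, snd a + snd b).
Definition Cmul (a b : Cx) : Cx :=
  (fst a * fst b - snd a * snd b, fst a * snd b + snd a * fst b).
Fixpoint Csum (f : nat -> Cx) (n : nat) : Cx :=
  match n with
  | O => f O
  | S n' => Cadd (Csum f n') (f n)
  end.
Definition cmmul (r : nat) (A B : nat -> nat -> Cx) : nat -> nat -> Cx :=
  fun i j => Csum (fun k => Cmul (A i k) (B k j)) r.
Definition ckd (i j : nat) : Cx := (kd i j, 0).
Definition cdiag (d : nat -> Cx) : nat -> nat -> Cx :=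
  fun i j => if Nat.eqb i j then d i else (0, 0).

Definition diagonalizable (r : nat) (A : nat -> nat -> R) : Prop :=
  exists (P Q : nat -> nat -> Cx) (d : nat -> Cx),
    (forall i j, (i <= r)%nat -> (j <= r)%nat -> cmmul r P Q i j = ckd i j) /\
    (forall i j, (i <= r)%nat -> (j <= r)%nat -> cmmul r Q P i j = ckd i j) /\
    (forall i j, (i <= r)%nat -> (j <= r)%nat ->
        (A i j, 0) = cmmul r (cmmul r P (cdiag d)) Q i j).

Definition upd (f : nat -> nat) (i k : nat) : nat -> nat :=
  fun j => if Nat.eqb j i then k else f j.

(** sum of F over all f : nat -> nat with f t in {0..K} for t = 1..T
    (and f t = 0 elsewhere). *)
Fixpoint sumT (T K : nat) (F : (nat -> nat) -> R) : R :=
  match T with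
  | O => F (fun _ => O)
  | S T' => sum_f_R0 (fun k => sumT T' K (fun f => F (upd f (S T') k))) K
  end.

Fixpoint prod1 (T : nat) (g : nat -> R) : R :=
  match T with
  | O => 1
  | S T' => prod1 T' g * g (S T')
  end.

(** Joint probability of (X_0 = xs 0, X'_t = xps t, X_t = xs t, Y_t = ys t). *)
Definition htmm_weight (r T : nat) (q : nat -> nat -> R) (p00 p10 : nat -> R)
  (nu : nat -> R) (xs xps ys : nat -> nat) : R :=
  nu (xs O) *
  prod1 T (fun t => Ml r q (xps t) (xs (t - 1)%nat) * Ms q (xs t) (xps t)
                     * pem p00 p10 (xs t) (xps t) (ys t)).

(** E[F(Y)] with Y-values truncated at N (hidden states summed over S). *)
Definition htmm_ET (r T : nat) (q : nat -> nat -> R) (p00 p10 : nat -> R)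
  (nu : nat -> R) (F : (nat -> nat) -> R) (N : nat) : R :=
  sum_f_R0 (fun x0 =>
    sumT T r (fun xs =>
      sumT T r (fun xps =>
        sumT T N (fun ys =>
          htmm_weight r T q p00 p10 nu (upd xs O x0) xps ys * F ys)))) r.

(** Expectation of a nonnegative functional F of (Y_1..Y_T):
    monotone limit of the truncated sums. *)
Definition htmm_E (r T : nat) (q : nat -> nat -> R) (p00 p10 : nat -> R)
  (nu : nat -> R) (F : (nat -> nat) -> R) : R :=
  Rlim (htmm_ET r T q p00 p10 nu F).

Definition htmm_mean (r T : nat) q p00 p10 nu (t : nat) : R :=
  htmm_E r T q p00 p10 nu (fun ys => INR (ys t)).

Definition htmm_cov (r T : nat) q p00 p10 nu (t t' : nat) : R :=
  htmm_E r T q p00 p10 nu (fun ys => INR (ys t) * INR (ys t'))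
  - htmm_mean r T q p00 p10 nu t * htmm_mean r T q p00 p10 nu t'.

(** Inner-model parameters. Given X'_t = 0: X_t = x w.p. q_{x0},
    and Y_t ~ p_{x0}. *)
Definition theta1 (r : nat) q p00 p10 : R :=
  sum_f_R0 (fun x => q x O * mean_nat (pem p00 p10 x O)) r.

Definition theta2 (r : nat) q p00 p10 : R :=
  q O O * mean_nat (pem p00 p10 O O) / theta1 r q p00 p10.

Definition inner_var (r : nat) q p00 p10 : R :=
  sum_f_R0 (fun x => q x O * mom2_nat (pem p00 p10 x O)) r
  - (theta1 r q p00 p10) ^ 2.

Definition theta3 (r : nat) q p00 p10 : R :=
  inner_var r q p00 p10 / (theta1 r q p00 p10) ^ 2 - 1 / theta1 r q p00 p10.

Definition mu0 (r : nat) q p00 p10 (k : nat) : R :=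
  theta1 r q p00 p10 / q O O * mpow r (Mmat r q) k O O.

From Stdlib Require Import Reals Lra Lia ClassicalEpsilon FunctionalExtensionality.
Open Scope R_scope.

(** The joint law of the HTMM is a product over time of hidden transition
    weights and emission weights.  Hence the expectation of a monomial
    [Y_1^(n 1) * ... * Y_T^(n T)] with exponents [n s <= 2] is, after
    summing out the observations, a sum over hidden paths of products of
    one-step factors, and summing out the hidden path one step at a time
    turns it into a forward recursion [forward] whose kernel at step [s] is
    the transition matrix [M] (transposed) if [n s = 0], and otherwise
    factors through the event [X'_s = 0] (emissions are a.s. 0 when
    [X'_s <> 0]) with the [n s]-th emission moment of [p_{x0}].

    Specialising to one or two observed times yields
    [E Y_t], [E Y_t^2] and [E (Y_t Y_t')] in terms of [P(X'_t = 0)],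
    [theta_1] and powers of [M], and the covariance formulas follow by
    algebra. *)

Lemma Rlim_unique (u : nat -> R) (l : R) : Un_cv u l -> Rlim u = l.
Proof.
  intro Hu. unfold Rlim.
  assert (Hex : exists l, Un_cv u l) by (exists l; exact Hu).
  eapply UL_sequence; [apply (epsilon_spec (inhabits 0) _ Hex)|exact Hu].
Qed.

Lemma Rseries_cv (f : nat -> R) :
  (exists l, Un_cv (sum_f_R0 f) l) -> Un_cv (sum_f_R0 f) (Rseries f).
Proof.
  intros [l Hl]. unfold Rseries.
  rewrite (Rlim_unique (fun n => sum_f_R0 f n) l Hl). exact Hl.
Qed.

Lemma CV_const (c : R) : Un_cv (fun _ => c) c.
Proof.
  intros e He. exists O. intros n _. unfold Rdist.
  rewrite Rminus_diag, Rabs_R0. exact He.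
Qed.

Lemma CV_ext (u v : nat -> R) (l : R) :
  (forall N, u N = v N) -> Un_cv u l -> Un_cv v l.
Proof.
  intros E Hu e He. destruct (Hu e He) as [N HN].
  exists N. intros n Hn. rewrite <- E. auto.
Qed.

Lemma CV_sum (u : nat -> nat -> R) (l : nat -> R) (n : nat) :
  (forall i, Un_cv (fun N => u N i) (l i)) ->
  Un_cv (fun N => sum_f_R0 (u N) n) (sum_f_R0 l n).
Proof. intros H. induction n; simpl; [apply H|apply CV_plus; auto]. Qed.

Lemma sum_ext (u v : nat -> R) (n : nat) :
  (forall i, u i = v i) -> sum_f_R0 u n = sum_f_R0 v n.
Proof. intros H. apply sum_eq. auto. Qed.

Lemma sum_scal_l (c : R) (u : nat -> R) (n : nat) :
  sum_f_R0 (fun i => c * u i) n = c * sum_f_R0 u n.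
Proof. induction n; simpl; [|rewrite IHn]; ring. Qed.

Lemma sum_swap (f : nat -> nat -> R) (n m : nat) :
  sum_f_R0 (fun i => sum_f_R0 (fun j => f i j) m) n =
  sum_f_R0 (fun j => sum_f_R0 (fun i => f i j) n) m.
Proof.
  induction n; simpl; [reflexivity|]. rewrite IHn, <- sum_plus. reflexivity.
Qed.

Lemma sum_first (f : nat -> R) (n : nat) :
  (forall i, (1 <= i)%nat -> f i = 0) -> sum_f_R0 f n = f O.
Proof.
  intros H. induction n; simpl; [reflexivity|]. rewrite IHn, (H (S n)) by lia. ring.
Qed.

Lemma kd_sym (a b : nat) : kd a b = kd b a.
Proof. unfold kd. rewrite Nat.eqb_sym. reflexivity. Qed.

Lemma sum_kd_pick (f : nat -> R) (x n : nat) :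
  (x <= n)%nat -> sum_f_R0 (fun z => kd z x * f z) n = f x.
Proof.
  intros Hx. induction n; simpl.
  - assert (x = O) by lia. subst. unfold kd. simpl. ring.
  - destruct (Nat.eq_dec x (S n)) as [->|Hne].
    + rewrite (sum_eq _ (fun _ => 0)), sum_cte.
      * unfold kd. rewrite Nat.eqb_refl. ring.
      * intros i Hi. unfold kd. destruct (Nat.eqb_spec i (S n)); [lia|ring].
    + rewrite IHn by lia. unfold kd. destruct (Nat.eqb_spec (S n) x); [lia|ring].
Qed.

Lemma prod1_ext (T : nat) (a b : nat -> R) :
  (forall s, (1 <= s <= T)%nat -> a s = b s) -> prod1 T a = prod1 T b.
Proof.
  induction T; intros H; cbn [prod1]; [reflexivity|].
  rewrite IHT by (intros; apply H; lia). rewrite H by lia. reflexivity.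
Qed.

Lemma prod1_mul (T : nat) (a b : nat -> R) :
  prod1 T (fun s => a s * b s) = prod1 T a * prod1 T b.
Proof. induction T; simpl; [|rewrite IHT]; ring. Qed.

Lemma prod1_single (T t : nat) (a : R) : (1 <= t <= T)%nat ->
  prod1 T (fun s => if Nat.eqb s t then a else 1) = a.
Proof.
  assert (Hout : forall T, (T < t)%nat ->
            prod1 T (fun s => if Nat.eqb s t then a else 1) = 1).
  { induction T0; intros H; cbn [prod1]; [reflexivity|].
    rewrite IHT0 by lia. destruct (Nat.eqb_spec (S T0) t); [lia|ring]. }
  induction T; intros H; cbn [prod1]; [lia|].
  destruct (Nat.eqb_spec (S T) t) as [<-|Hne].
  - rewrite Hout by lia. ring.
  - rewrite IHT by lia. ring.
Qed.

Lemma CV_prod1 (T : nat) (u : nat -> nat -> R) (l : nat -> R) :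
  (forall s, Un_cv (fun N => u N s) (l s)) ->
  Un_cv (fun N => prod1 T (u N)) (prod1 T l).
Proof.
  intros H. induction T; simpl; [apply CV_const|apply CV_mult; auto].
Qed.

Lemma upd_eq (f : nat -> nat) (i k : nat) : upd f i k i = k.
Proof. unfold upd. rewrite Nat.eqb_refl. reflexivity. Qed.

Lemma upd_neq (f : nat -> nat) (i k s : nat) : s <> i -> upd f i k s = f s.
Proof. intros H. unfold upd. destruct (Nat.eqb_spec s i); [lia|reflexivity]. Qed.

Lemma upd_upd_other (f : nat -> nat) (i j k x s : nat) :
  s <> j -> upd (upd f j k) i x s = upd f i x s.
Proof.
  intros H. unfold upd. destruct (Nat.eqb_spec s i); [reflexivity|].
  destruct (Nat.eqb_spec s j); [lia|reflexivity].
Qed.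

Lemma sumT_ext (T K : nat) (F G : (nat -> nat) -> R) :
  (forall f, F f = G f) -> sumT T K F = sumT T K G.
Proof.
  revert F G. induction T; intros F G H; simpl; [apply H|].
  apply sum_ext. intro k. apply IHT. intro f. apply H.
Qed.

Lemma sumT_scal (T K : nat) (c : R) (F : (nat -> nat) -> R) :
  sumT T K (fun f => c * F f) = c * sumT T K F.
Proof.
  revert F. induction T; intros F; simpl; [reflexivity|].
  rewrite <- sum_scal_l. apply sum_ext. intro k. apply IHT.
Qed.

Lemma sumT_sum (T K : nat) (F : nat -> (nat -> nat) -> R) (n : nat) :
  sumT T K (fun f => sum_f_R0 (fun i => F i f) n) =
  sum_f_R0 (fun i => sumT T K (F i)) n.
Proof.
  revert F. induction T; intros F; simpl; [reflexivity|].
  rewrite (sum_ext _ (fun k => sum_f_R0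
             (fun i => sumT T K (fun f => F i (upd f (S T) k))) n)).
  - apply sum_swap.
  - intro k. apply (IHT (fun i f => F i (upd f (S T) k))).
Qed.

Lemma CV_sumT (T K : nat) (F : nat -> (nat -> nat) -> R) (L : (nat -> nat) -> R) :
  (forall f, Un_cv (fun N => F N f) (L f)) ->
  Un_cv (fun N => sumT T K (F N)) (sumT T K L).
Proof.
  revert F L. induction T; intros F L H; simpl; [apply H|].
  apply (CV_sum (fun N k => sumT T K (fun f => F N (upd f (S T) k)))).
  intro k. apply (IHT (fun N f => F N (upd f (S T) k))). intro f. apply H.
Qed.

Lemma sumT_factor (T K : nat) (C : R) (h : nat -> nat -> R) :
  sumT T K (fun f => C * prod1 T (fun s => h s (f s))) =
  C * prod1 T (fun s => sum_f_R0 (h s) K).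
Proof.
  revert C. induction T; intros C; simpl; [reflexivity|].
  rewrite (sum_ext _ (fun k => prod1 T (fun s => sum_f_R0 (h s) K) * (C * h (S T) k))).
  - rewrite sum_scal_l, sum_scal_l. ring.
  - intro k. rewrite Rmult_comm, <- (IHT (C * h (S T) k)). apply sumT_ext. intro f.
    rewrite upd_eq, (prod1_ext T _ (fun s => h s (f s))); [ring|].
    intros s Hs. rewrite upd_neq by lia. reflexivity.
Qed.

(** ** The forward recursion of a time-inhomogeneous kernel *)

(** [forward r nu K s x] is the (unnormalised) weight of being in state [x]
    at time [s], starting from the initial weights [nu] on [{0..r}] and
    moving from [y] to [x] at time [s] with weight [K s y x]. *)
Fixpoint forward (r : nat) (nu : nat -> R) (K : nat -> nat -> nat -> R)
  (s : nat) : nat -> R :=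
  match s with
  | O => nu
  | S s' => fun x => sum_f_R0 (fun y => forward r nu K s' y * K (S s') y x) r
  end.

Section Forward.

Variables (r : nat) (nu : nat -> R).

(** Summing a path functional over all paths [x_0 .. x_T] weighted by the
    one-step kernels gives the forward weights at time [T]; the hidden path
    is the function [upd xs 0 x0]. *)
Lemma path_sum_forward (K : nat -> nat -> nat -> R) (T : nat) :
  forall G : nat -> R,
  sum_f_R0 (fun x0 => nu x0 * sumT T r (fun xs =>
     prod1 T (fun s => K s (upd xs 0 x0 (s - 1)%nat) (upd xs 0 x0 s))
     * G (upd xs 0 x0 T))) r
  = sum_f_R0 (fun x => forward r nu K T x * G x) r.
Proof.
  induction T; intros G.
  - cbn [sumT prod1 forward]. apply sum_ext. intro x0. rewrite upd_eq. ring.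
  - set (G' := fun z => sum_f_R0 (fun k => K (S T) z k * G k) r).
    transitivity (sum_f_R0 (fun x => forward r nu K T x * G' x) r).
    + rewrite <- IHT. apply sum_ext. intro x0. f_equal. cbn [sumT].
      rewrite <- sumT_sum. apply sumT_ext. intro f. unfold G'.
      rewrite <- sum_scal_l. apply sum_ext. intro k. cbn [prod1].
      rewrite (prod1_ext T _ (fun s => K s (upd f 0 x0 (s - 1)%nat) (upd f 0 x0 s))).
      * replace (S T - 1)%nat with T by lia.
        rewrite (upd_upd_other f 0 (S T) k x0 T) by lia.
        rewrite (upd_neq _ 0 x0 (S T)) by lia. rewrite upd_eq. ring.
      * intros s Hs. rewrite !upd_upd_other by lia. reflexivity.
    + unfold G'. cbn [forward].
      rewrite (sum_ext _ (fun x => sum_f_R0 (fun k => forward r nu K T x * K (S T) x k * G k) r)).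
      * rewrite sum_swap. apply sum_ext. intro k.
        rewrite (sum_ext _ (fun y => G k * (forward r nu K T y * K (S T) y k))) by (intro; ring).
        rewrite sum_scal_l. ring.
      * intro x. rewrite <- sum_scal_l. apply sum_ext. intro; ring.
Qed.

Lemma forward_ext (K1 K2 : nat -> nat -> nat -> R) (j : nat) :
  (forall s y x, (1 <= s <= j)%nat -> K1 s y x = K2 s y x) ->
  forall x, forward r nu K1 j x = forward r nu K2 j x.
Proof.
  induction j; intros H x; cbn [forward]; [reflexivity|].
  apply sum_ext. intro y. rewrite IHj by (intros; apply H; lia).
  rewrite H by lia. reflexivity.
Qed.

Lemma forward_mass_conserved (K : nat -> nat -> nat -> R) (j d : nat) :
  (forall s y, (j < s <= j + d)%nat -> (y <= r)%nat ->
     sum_f_R0 (fun x => K s y x) r = 1) ->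
  sum_f_R0 (forward r nu K (j + d)) r = sum_f_R0 (forward r nu K j) r.
Proof.
  induction d; intros H.
  - rewrite Nat.add_0_r. reflexivity.
  - rewrite Nat.add_succ_r. cbn [forward]. rewrite <- IHd by (intros; apply H; lia).
    rewrite sum_swap. apply sum_eq. intros y Hy.
    rewrite sum_scal_l, H by lia. ring.
Qed.

Lemma forward_matrix_power (K : nat -> nat -> nat -> R) (A : nat -> nat -> R)
  (j d x : nat) :
  (forall s y x, (j < s <= j + d)%nat -> K s y x = A x y) -> (x <= r)%nat ->
  forward r nu K (j + d) x =
  sum_f_R0 (fun z => mpow r A d x z * forward r nu K j z) r.
Proof.
  revert x. induction d; intros x H Hx.
  - rewrite Nat.add_0_r. cbn [mpow].
    rewrite (sum_ext _ (fun z => kd z x * forward r nu K j z)) by (intro; rewrite kd_sym; reflexivity).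
    rewrite sum_kd_pick; auto.
  - rewrite Nat.add_succ_r. cbn [forward mpow].
    rewrite (sum_eq _ (fun y => sum_f_R0 (fun z => A x y * mpow r A d y z
               * forward r nu K j z) r)).
    + rewrite sum_swap. apply sum_ext. intro z. unfold mmul.
      rewrite (Rmult_comm _ (forward r nu K j z)), <- sum_scal_l.
      apply sum_ext. intro; ring.
    + intros y Hy. rewrite IHd by (auto; intros; apply H; lia).
      rewrite H by lia. rewrite (Rmult_comm _ (A x y)), <- sum_scal_l.
      apply sum_ext. intro; ring.
Qed.

Lemma forward_rank_one (K : nat -> nat -> nat -> R) (a b : nat -> R) (j x : nat) :
  (forall y x, K (S j) y x = a y * b x) ->
  forward r nu K (S j) x =
  sum_f_R0 (fun y => forward r nu K j y * a y) r * b x.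
Proof.
  intros H. cbn [forward]. rewrite Rmult_comm, <- sum_scal_l.
  apply sum_ext. intro y. rewrite H. ring.
Qed.

End Forward.

Lemma mmul_assoc (r : nat) (A B C : nat -> nat -> R) (i j : nat) :
  mmul r (mmul r A B) C i j = mmul r A (mmul r B C) i j.
Proof.
  unfold mmul.
  rewrite (sum_ext _ (fun k => sum_f_R0 (fun l => A i l * B l k * C k j) r)).
  - rewrite sum_swap. apply sum_ext. intro l. rewrite <- sum_scal_l.
    apply sum_ext. intro; ring.
  - intro k. rewrite (Rmult_comm _ (C k j)), <- sum_scal_l. apply sum_ext. intro; ring.
Qed.

(** Powers of [A] commute with [A], so [A^(k+1) = A^k A]. *)
Lemma mpow_S_r (r : nat) (A : nat -> nat -> R) (k i j : nat) :
  (i <= r)%nat -> (j <= r)%nat ->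
  mpow r A (S k) i j = sum_f_R0 (fun l => mpow r A k i l * A l j) r.
Proof.
  revert i j. induction k; intros i j Hi Hj; cbn [mpow]; unfold mmul.
  - rewrite (sum_ext _ (fun l => kd l j * A i l)) by (intro; ring).
    rewrite sum_kd_pick by exact Hj.
    rewrite (sum_ext _ (fun l => kd l i * A l j)) by (intro; rewrite kd_sym; ring).
    rewrite sum_kd_pick by exact Hi. reflexivity.
  - rewrite (sum_eq _ (fun l => A i l * sum_f_R0 (fun m => mpow r A k l m * A m j) r))
      by (intros l Hl; rewrite <- IHk by auto; reflexivity).
    symmetry. apply (mmul_assoc r A (mpow r A k) A i j).
Qed.

(** ** Moments of order at most two from a finite moment generating function *)

Lemma exp_ge_1_plus (x : R) : 1 + x <= exp x.
Proof.
  destruct (Req_dec x 0) as [->|Hx]; [rewrite exp_0; lra|].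
  left. apply exp_ineq1. exact Hx.
Qed.

Lemma pow_le_exp (s z : R) (m : nat) : 0 < s -> 0 <= z -> (m <= 2)%nat ->
  z ^ m <= (1 + 1/s + 4/(s*s)) * exp (s*z).
Proof.
  intros Hs Hz Hm.
  set (E := exp (s*z)).
  assert (E1 : 1 + s*z <= E) by apply exp_ge_1_plus.
  assert (E2 : (1 + s*z/2) * (1 + s*z/2) <= E).
  { unfold E. replace (s*z) with (s*z/2 + s*z/2) by field. rewrite exp_plus.
    pose proof (exp_ge_1_plus (s*z/2)).
    assert (0 <= s*z/2) by (apply Rmult_le_pos; [nra|lra]).
    apply Rmult_le_compat; lra. }
  set (u := 1/s). assert (Hu : s * u = 1) by (unfold u; field; lra).
  assert (Hu0 : 0 < u) by (unfold u; apply Rdiv_lt_0_compat; lra).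
  replace (4/(s*s)) with (4*u*u) by (unfold u; field; lra).
  assert (HE : 0 < E) by apply exp_pos.
  assert (Hzu : z = u * (s*z)) by (rewrite <- Rmult_assoc, (Rmult_comm u s), Hu; ring).
  destruct m as [|[|[|m]]]; simpl; try lia.
  - nra.
  - assert (z <= u * E) by nra. nra.
  - assert ((s*z)*(s*z) <= 4*E) by nra.
    assert (z*z = u*u*((s*z)*(s*z))) by (rewrite Hzu at 1; rewrite Hzu at 1; ring).
    assert (0 <= u*u) by nra. nra.
Qed.

Lemma moment_exists (p : nat -> R) (m : nat) :
  is_prob_nat p -> finite_mgf_near0 p -> (m <= 2)%nat ->
  exists l, Un_cv (sum_f_R0 (fun y => INR y ^ m * p y)) l.
Proof.
  intros [Hp0 _] [d [Hd Hmgf]] Hm.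
  destruct (Hmgf (d/2)) as [l0 Hl0]; [rewrite Rabs_pos_eq; lra|].
  set (C := 1 + 1/(d/2) + 4/((d/2)*(d/2))).
  assert (Hdom : Un_cv (sum_f_R0 (fun y => C * (p y * exp (d/2 * INR y)))) (C * l0)).
  { eapply CV_ext; [intro N; symmetry; apply sum_scal_l|].
    apply CV_mult; [apply CV_const|exact Hl0]. }
  destruct (Rseries_CV_comp (fun y => INR y ^ m * p y)
              (fun y => C * (p y * exp (d/2 * INR y)))) as [l Hl].
  - intro y. pose proof (Hp0 y) as Hpy. split.
    + apply Rmult_le_pos; [apply pow_le, pos_INR|lra].
    + pose proof (pow_le_exp (d/2) (INR y) m ltac:(lra) (pos_INR y) Hm) as Hbound.
      fold C in Hbound. nra.
  - exists (C*l0). exact Hdom.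
  - exists l. exact Hl.
Qed.

(** ** Expectations of monomials in the HTMM *)

Section HTMM.

Variables (r : nat) (q : nat -> nat -> R) (p00 p10 : nat -> R).

Definition emission_moment (m x x' : nat) : R :=
  Rseries (fun y => INR y ^ m * pem p00 p10 x x' y).

Definition truncated_moment (m N x x' : nat) : R :=
  sum_f_R0 (fun y => INR y ^ m * pem p00 p10 x x' y) N.

Definition hidden_kernel (E : nat -> nat -> nat -> R) (s y x : nat) : R :=
  sum_f_R0 (fun x' => Ml r q x' y * Ms q x x' * E s x x') r.

Definition moment_kernel (n : nat -> nat) : nat -> nat -> nat -> R :=
  hidden_kernel (fun s => emission_moment (n s)).

Definition hidden_path_sum (T : nat) (nu : nat -> R)
  (E : nat -> nat -> nat -> R) : R :=
  sum_f_R0 (fun x0 => sumT T r (fun xs => sumT T r (fun xps =>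
    nu x0 * prod1 T (fun s => Ml r q (xps s) (upd xs 0 x0 (s - 1)%nat)
                               * Ms q (upd xs 0 x0 s) (xps s)
                               * E s (upd xs 0 x0 s) (xps s))))) r.

Lemma htmm_ET_monomial (T : nat) (nu : nat -> R) (n : nat -> nat) (N : nat) :
  htmm_ET r T q p00 p10 nu (fun ys => prod1 T (fun s => INR (ys s) ^ n s)) N =
  hidden_path_sum T nu (fun s => truncated_moment (n s) N).
Proof.
  unfold htmm_ET, hidden_path_sum.
  apply sum_ext; intro x0; apply sumT_ext; intro xs; apply sumT_ext; intro xps.
  unfold htmm_weight. rewrite upd_eq.
  set (h := fun s y => Ml r q (xps s) (upd xs 0 x0 (s - 1)%nat)
              * Ms q (upd xs 0 x0 s) (xps s)
              * (INR y ^ n s * pem p00 p10 (upd xs 0 x0 s) (xps s) y)).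
  transitivity (sumT T N (fun ys => nu x0 * prod1 T (fun s => h s (ys s)))).
  - apply sumT_ext. intro ys. rewrite Rmult_assoc, <- prod1_mul. f_equal.
    apply prod1_ext. intros s _. unfold h. ring.
  - rewrite sumT_factor. f_equal. apply prod1_ext. intros s _.
    unfold truncated_moment. rewrite <- sum_scal_l. apply sum_ext. intro; unfold h; ring.
Qed.

Lemma hidden_path_sum_cv (T : nat) (nu : nat -> R)
  (E : nat -> nat -> nat -> nat -> R) (L : nat -> nat -> nat -> R) :
  (forall s x x', Un_cv (fun N => E N s x x') (L s x x')) ->
  Un_cv (fun N => hidden_path_sum T nu (E N)) (hidden_path_sum T nu L).
Proof.
  intros HE. unfold hidden_path_sum.
  apply CV_sum. intro x0. apply CV_sumT. intro xs. apply CV_sumT. intro xps.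
  apply CV_mult; [apply CV_const|]. apply CV_prod1. intro s.
  apply CV_mult; [apply CV_const|apply HE].
Qed.

Lemma hidden_path_sum_forward (T : nat) (nu : nat -> R) (E : nat -> nat -> nat -> R) :
  hidden_path_sum T nu E = sum_f_R0 (forward r nu (hidden_kernel E) T) r.
Proof.
  transitivity (sum_f_R0 (fun x => forward r nu (hidden_kernel E) T x * 1) r).
  - rewrite <- path_sum_forward. apply sum_ext. intro x0.
    rewrite <- sumT_scal. apply sumT_ext. intro xs. rewrite Rmult_1_r.
    apply (sumT_factor T r (nu x0) (fun s x' => Ml r q x' (upd xs 0 x0 (s - 1)%nat)
       * Ms q (upd xs 0 x0 s) x' * E s (upd xs 0 x0 s) x')).
  - apply sum_ext. intro; ring.
Qed.

Hypotheses (hp00 : is_prob_nat p00) (hp10 : is_prob_nat p10)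
           (hmgf00 : finite_mgf_near0 p00) (hmgf10 : finite_mgf_near0 p10).

(** Emissions are identically 0 when [X'_s <> 0], so all truncated
    moments there equal [0^m]. *)
Lemma truncated_moment_silent (m N x x' : nat) : x' <> O ->
  truncated_moment m N x x' = INR 0 ^ m.
Proof.
  intros Hx'. unfold truncated_moment, pem.
  destruct (Nat.eqb_spec x' 0) as [|_]; [lia|].
  rewrite <- (sum_kd_pick (fun y => INR y ^ m) 0 N) by lia.
  apply sum_ext. intro; ring.
Qed.

Lemma emission_moment_silent (m x x' : nat) : x' <> O ->
  emission_moment m x x' = INR 0 ^ m.
Proof.
  intros Hx'. apply Rlim_unique. eapply CV_ext; [|apply CV_const].
  intro N. symmetry. apply (truncated_moment_silent m N x x' Hx').
Qed.

Lemma truncated_moment_cv (m x x' : nat) : (m <= 2)%nat ->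
  Un_cv (fun N => truncated_moment m N x x') (emission_moment m x x').
Proof.
  intros Hm. unfold truncated_moment, emission_moment. apply Rseries_cv.
  destruct (Nat.eq_dec x' 0) as [->|Hx'].
  - unfold pem. simpl. destruct (Nat.eqb x 0); apply moment_exists; auto.
  - exists (INR 0 ^ m). eapply CV_ext; [|apply CV_const]. intro N.
    symmetry. apply (truncated_moment_silent m N x x' Hx').
Qed.

Lemma htmm_E_monomial (T : nat) (nu : nat -> R) (n : nat -> nat) :
  (forall s, n s <= 2)%nat ->
  htmm_E r T q p00 p10 nu (fun ys => prod1 T (fun s => INR (ys s) ^ n s)) =
  sum_f_R0 (forward r nu (moment_kernel n) T) r.
Proof.
  intros Hn. unfold htmm_E, moment_kernel. rewrite <- hidden_path_sum_forward.
  apply Rlim_unique. eapply CV_ext; [intro N; symmetry; apply htmm_ET_monomial|].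
  apply (hidden_path_sum_cv T nu (fun N s => truncated_moment (n s) N)).
  intros s x x'. apply truncated_moment_cv, Hn.
Qed.

Hypothesis hqsum : forall z, (z <= r - 1)%nat -> sum_f_R0 (fun x => q x z) r = 1.

Lemma Mmat_column_sum (y : nat) : (y <= r)%nat ->
  sum_f_R0 (fun x => Mmat r q x y) r = 1.
Proof.
  intros Hy. unfold Mmat, mmul. rewrite sum_swap.
  assert (HMs : forall k, (k <= r)%nat -> sum_f_R0 (fun i => Ms q i k) r = 1).
  { intros k Hk. unfold Ms. destruct (Nat.eqb_spec k 0) as [->|Hk0].
    - apply hqsum. lia.
    - rewrite (sum_ext _ (fun i => kd i k * 1)) by (intro; ring).
      apply sum_kd_pick. exact Hk. }
  rewrite (sum_eq _ (fun k => Ml r q k y))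
    by (intros k Hk; rewrite (sum_ext _ (fun i => Ml r q k y * Ms q i k)) by (intro; ring);
        rewrite sum_scal_l, HMs by exact Hk; ring).
  unfold Ml. destruct (Nat.eqb_spec y 0); [|destruct (Nat.eqb_spec y r)].
  - rewrite (sum_ext _ (fun x => kd x 0 * 1)) by (intro; ring). apply sum_kd_pick. lia.
  - rewrite (sum_ext _ (fun x => kd x r * 1)) by (intro; ring). apply sum_kd_pick. lia.
  - apply hqsum. lia.
Qed.

(** Row 0 of [M]: from state 0 the chain reaches 0 only through [X' = 0]. *)
Lemma Mmat_row0 (y : nat) : Mmat r q 0 y = q O O * Ml r q 0 y.
Proof.
  unfold Mmat, mmul. rewrite sum_first; [reflexivity|].
  intros i Hi. unfold Ms, kd. destruct i; [lia|]. simpl. ring.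
Qed.

Lemma Mmat_col0 (x : nat) : Mmat r q x 0 = q x O.
Proof.
  unfold Mmat, mmul. rewrite sum_first; [unfold Ml, Ms, kd; simpl; ring|].
  intros i Hi. unfold Ml, kd. simpl. destruct i; [lia|]. simpl. ring.
Qed.

Lemma emission_moment_order0 (x x' : nat) : emission_moment 0 x x' = 1.
Proof.
  destruct (Nat.eq_dec x' 0) as [->|Hx']; [|apply emission_moment_silent; exact Hx'].
  unfold emission_moment, Rseries. apply Rlim_unique.
  assert (Hp : is_prob_nat (pem p00 p10 x 0))
    by (unfold pem; simpl; destruct (Nat.eqb x 0); assumption).
  destruct Hp as [_ Hsum]. eapply CV_ext; [|exact Hsum].
  intro N. apply sum_ext. intro; simpl; ring.
Qed.

Lemma moment_kernel_unobserved (n : nat -> nat) (s y x : nat) : n s = O ->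
  moment_kernel n s y x = Mmat r q x y.
Proof.
  intros Hn. unfold moment_kernel, hidden_kernel, Mmat, mmul.
  apply sum_ext. intro x'. rewrite Hn, emission_moment_order0. ring.
Qed.

(** At an observed step only [X'_s = 0] contributes: the kernel is rank one. *)
Lemma moment_kernel_observed (n : nat -> nat) (s y x : nat) : (1 <= n s)%nat ->
  moment_kernel n s y x = Ml r q 0 y * (q x O * emission_moment (n s) x 0).
Proof.
  intros Hn. unfold moment_kernel, hidden_kernel. rewrite sum_first.
  - unfold Ms. simpl. ring.
  - intros i Hi. rewrite emission_moment_silent by lia.
    destruct (n s) as [|m]; [lia|]. simpl. ring.
Qed.

(** Law of the hidden state [X_j], and probability of [X'_(j+1) = 0]. *)
Definition state_law (nu : nat -> R) (j : nat) : nat -> R :=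
  forward r nu (fun _ y x => Mmat r q x y) j.

Definition jump_prob (nu : nat -> R) (j : nat) : R :=
  sum_f_R0 (fun y => state_law nu j y * Ml r q 0 y) r.

Lemma forward_unobserved (nu : nat -> R) (n : nat -> nat) (j x : nat) :
  (forall s, (1 <= s <= j)%nat -> n s = O) ->
  forward r nu (moment_kernel n) j x = state_law nu j x.
Proof.
  intros Hn. apply forward_ext. intros s y x' Hs.
  apply moment_kernel_unobserved, Hn, Hs.
Qed.

Lemma forward_first_observed (nu : nat -> R) (n : nat -> nat) (j x : nat) :
  (forall s, (1 <= s <= j)%nat -> n s = O) -> (1 <= n (S j))%nat ->
  forward r nu (moment_kernel n) (S j) x =
  jump_prob nu j * (q x O * emission_moment (n (S j)) x 0).
Proof.
  intros Hn Hobs.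
  rewrite (forward_rank_one r nu _ (Ml r q 0) (fun x => q x O * emission_moment (n (S j)) x 0))
    by (intros; apply moment_kernel_observed, Hobs).
  unfold jump_prob. f_equal. apply sum_ext. intro y.
  rewrite forward_unobserved by exact Hn. reflexivity.
Qed.

Lemma forward_total_last_observed (nu : nat -> R) (n : nat -> nat) (t T : nat) :
  (1 <= t <= T)%nat -> (1 <= n t)%nat -> (forall s, (t < s <= T)%nat -> n s = O) ->
  sum_f_R0 (forward r nu (moment_kernel n) T) r =
  sum_f_R0 (fun y => forward r nu (moment_kernel n) (t - 1) y * Ml r q 0 y) r *
  sum_f_R0 (fun x => q x O * emission_moment (n t) x 0) r.
Proof.
  intros Ht Hobs Hlast.
  replace T with (t + (T - t))%nat by lia.
  rewrite forward_mass_conserved.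
  - destruct t as [|t0]; [lia|]. replace (S t0 - 1)%nat with t0 by lia.
    rewrite <- sum_scal_l. apply sum_ext. intro x.
    apply (forward_rank_one r nu _ (Ml r q 0)
             (fun x => q x O * emission_moment (n (S t0)) x 0)).
    intros; apply moment_kernel_observed, Hobs.
  - intros s y Hs Hy.
    rewrite (sum_ext _ (fun x => Mmat r q x y))
      by (intro; apply moment_kernel_unobserved, Hlast; lia).
    apply Mmat_column_sum, Hy.
Qed.

(** ** Moments at one and two observation times *)

Lemma emission_moment_order1 (x x' : nat) :
  emission_moment 1 x x' = mean_nat (pem p00 p10 x x').
Proof.
  unfold emission_moment, mean_nat. f_equal.
  apply functional_extensionality. intro y. ring.
Qed.

Lemma htmm_E_single (nu : nat -> R) (T t m : nat) :
  (1 <= t <= T)%nat -> (1 <= m <= 2)%nat ->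
  htmm_E r T q p00 p10 nu (fun ys => INR (ys t) ^ m) =
  jump_prob nu (t - 1) * sum_f_R0 (fun x => q x O * emission_moment m x 0) r.
Proof.
  intros Ht Hm.
  set (n := fun s => if Nat.eqb s t then m else O).
  assert (Hnt : n t = m) by (unfold n; rewrite Nat.eqb_refl; reflexivity).
  assert (Hn0 : forall s, s <> t -> n s = O)
    by (intros s Hs; unfold n; destruct (Nat.eqb_spec s t); [lia|reflexivity]).
  replace (fun ys => INR (ys t) ^ m)
    with (fun ys : nat -> nat => prod1 T (fun s => INR (ys s) ^ n s)).
  2:{ apply functional_extensionality. intro ys.
      rewrite <- (prod1_single T t (INR (ys t) ^ m)) by exact Ht.
      apply prod1_ext. intros s _. unfold n. destruct (Nat.eqb_spec s t) as [->|]; reflexivity. }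
  rewrite htmm_E_monomial by (intro s; unfold n; destruct (Nat.eqb s t); lia).
  rewrite (forward_total_last_observed nu n t T Ht) by (try rewrite Hnt; intros; try apply Hn0; lia).
  rewrite Hnt. f_equal. unfold jump_prob. apply sum_ext. intro y.
  rewrite forward_unobserved by (intros; apply Hn0; lia). reflexivity.
Qed.

Lemma htmm_mean_formula (nu : nat -> R) (T t : nat) : (1 <= t <= T)%nat ->
  htmm_mean r T q p00 p10 nu t = jump_prob nu (t - 1) * theta1 r q p00 p10.
Proof.
  intros Ht. unfold htmm_mean.
  replace (fun ys => INR (ys t)) with (fun ys : nat -> nat => INR (ys t) ^ 1)
    by (apply functional_extensionality; intro; ring).
  rewrite htmm_E_single by (auto; lia). f_equal.
  unfold theta1. apply sum_ext. intro x. rewrite emission_moment_order1. reflexivity.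
Qed.

Lemma htmm_second_moment (nu : nat -> R) (T t : nat) : (1 <= t <= T)%nat ->
  htmm_E r T q p00 p10 nu (fun ys => INR (ys t) * INR (ys t)) =
  jump_prob nu (t - 1) * sum_f_R0 (fun x => q x O * mom2_nat (pem p00 p10 x 0)) r.
Proof.
  intros Ht.
  replace (fun ys => INR (ys t) * INR (ys t)) with (fun ys : nat -> nat => INR (ys t) ^ 2)
    by (apply functional_extensionality; intro; ring).
  apply htmm_E_single; [exact Ht|lia].
Qed.

(** Weight of [X'_t = 0] when [X_t'] has the weights [q_{z0} m_z]
    ([m_z] the mean of [p_{z0}]) and [d = t - t' - 1] hidden steps of [M]
    separate [t'] from [t - 1]: the lag-dependent factor of [E (Y_t Y_t')]. *)
Definition cross_term (d : nat) : R :=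
  sum_f_R0 (fun y => Ml r q 0 y * sum_f_R0 (fun z =>
    mpow r (Mmat r q) d y z * (q z O * mean_nat (pem p00 p10 z 0))) r) r.

Lemma htmm_E_pair (nu : nat -> R) (T t t' : nat) :
  (1 <= t')%nat -> (t' < t)%nat -> (t <= T)%nat ->
  htmm_E r T q p00 p10 nu (fun ys => INR (ys t) * INR (ys t')) =
  jump_prob nu (t' - 1) * theta1 r q p00 p10 * cross_term (t - t' - 1).
Proof.
  intros Ht' Htt Ht.
  set (n := fun s => if Nat.eqb s t then 1%nat else if Nat.eqb s t' then 1%nat else O).
  assert (Hnt : n t = 1%nat) by (unfold n; rewrite Nat.eqb_refl; reflexivity).
  assert (Hnt' : n t' = 1%nat).
  { unfold n. destruct (Nat.eqb_spec t' t); [lia|]. rewrite Nat.eqb_refl. reflexivity. }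
  assert (Hn0 : forall s, s <> t -> s <> t' -> n s = O).
  { intros s H1 H2. unfold n.
    destruct (Nat.eqb_spec s t), (Nat.eqb_spec s t'); [lia|lia|lia|reflexivity]. }
  replace (fun ys => INR (ys t) * INR (ys t'))
    with (fun ys : nat -> nat => prod1 T (fun s => INR (ys s) ^ n s)).
  2:{ apply functional_extensionality. intro ys.
      rewrite <- (prod1_single T t (INR (ys t))) by lia.
      rewrite <- (prod1_single T t' (INR (ys t'))) by lia.
      rewrite <- prod1_mul. apply prod1_ext. intros s _. unfold n.
      destruct (Nat.eqb_spec s t), (Nat.eqb_spec s t'); subst; try lia; simpl; ring. }
  rewrite htmm_E_monomial by (intro s; unfold n; destruct (Nat.eqb s t), (Nat.eqb s t'); lia).
  rewrite (forward_total_last_observed nu n t T) by (try rewrite Hnt; intros; try apply Hn0; lia).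
  replace (sum_f_R0 (fun x => q x O * emission_moment (n t) x 0) r) with (theta1 r q p00 p10)
    by (unfold theta1; apply sum_ext; intro x; rewrite Hnt, emission_moment_order1; reflexivity).
  destruct t' as [|a]; [lia|].
  replace (t - 1)%nat with (S a + (t - S a - 1))%nat by lia.
  replace (S a - 1)%nat with a by lia.
  set (d := (t - S a - 1)%nat).
  assert (Hprop : forall y, (y <= r)%nat ->
    forward r nu (moment_kernel n) (S a + d) y =
    jump_prob nu a * sum_f_R0 (fun z =>
      mpow r (Mmat r q) d y z * (q z O * mean_nat (pem p00 p10 z 0))) r).
  { intros y Hy. rewrite (forward_matrix_power r nu _ (Mmat r q))
      by (auto; intros; apply moment_kernel_unobserved, Hn0; unfold d in *; lia).
    rewrite <- sum_scal_l. apply sum_ext. intro z.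
    rewrite forward_first_observed by (intros; try rewrite Hnt'; try apply Hn0; lia).
    rewrite Hnt', emission_moment_order1. ring. }
  unfold cross_term. rewrite (sum_eq _ (fun y => jump_prob nu a * (Ml r q 0 y *
    sum_f_R0 (fun z => mpow r (Mmat r q) d y z * (q z O * mean_nat (pem p00 p10 z 0))) r)))
    by (intros y Hy; rewrite Hprop by exact Hy; ring).
  rewrite sum_scal_l. ring.
Qed.

Lemma mean_split (z : nat) :
  mean_nat (pem p00 p10 z 0) =
  mean_nat (pem p00 p10 1 0) + kd z 0 * (mean_nat (pem p00 p10 0 0) - mean_nat (pem p00 p10 1 0)).
Proof.
  destruct z; unfold kd; simpl; [ring|].
  change (pem p00 p10 (S z) 0) with (pem p00 p10 1 0). ring.
Qed.

Lemma theta1_split : theta1 r q p00 p10 =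
  mean_nat (pem p00 p10 1 0) + q O O * (mean_nat (pem p00 p10 0 0) - mean_nat (pem p00 p10 1 0)).
Proof.
  unfold theta1.
  rewrite (sum_ext _ (fun x => mean_nat (pem p00 p10 1 0) * q x O +
      kd x 0 * (q x O * (mean_nat (pem p00 p10 0 0) - mean_nat (pem p00 p10 1 0)))))
    by (intro x; rewrite mean_split; ring).
  rewrite sum_plus, sum_scal_l, hqsum by lia.
  rewrite sum_kd_pick by lia. ring.
Qed.

Lemma mpow_succ_00 (d : nat) :
  mpow r (Mmat r q) (S d) 0 0 =
  q O O * sum_f_R0 (fun y => Ml r q 0 y * mpow r (Mmat r q) d y 0) r.
Proof.
  cbn [mpow]. unfold mmul. rewrite <- sum_scal_l. apply sum_ext. intro y.
  rewrite Mmat_row0. ring.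
Qed.

Lemma mpow_succ_succ_00 (d : nat) :
  mpow r (Mmat r q) (S (S d)) 0 0 =
  q O O * sum_f_R0 (fun y => Ml r q 0 y *
            sum_f_R0 (fun z => mpow r (Mmat r q) d y z * q z O) r) r.
Proof.
  cbn [mpow]. unfold mmul at 1. rewrite <- sum_scal_l. apply sum_eq. intros y Hy.
  rewrite Mmat_row0.
  change (mmul r (Mmat r q) (mpow r (Mmat r q) d) y 0) with (mpow r (Mmat r q) (S d) y 0).
  rewrite mpow_S_r by lia.
  rewrite (sum_ext (fun z => mpow r (Mmat r q) d y z * Mmat r q z 0)
             (fun z => mpow r (Mmat r q) d y z * q z O)) by (intro z; rewrite Mmat_col0; reflexivity).
  ring.
Qed.

Lemma cross_term_mu0 (d : nat) : 0 < q O O < 1 -> theta1 r q p00 p10 <> 0 ->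
  (theta2 r q p00 p10 - q O O * (1 - theta2 r q p00 p10) / (1 - q O O))
    * mu0 r q p00 p10 (S d)
  + (1 - theta2 r q p00 p10) / (1 - q O O) * mu0 r q p00 p10 (S (S d))
  = cross_term d.
Proof.
  intros Hq00 Hth.
  set (mA := mean_nat (pem p00 p10 0 0)). set (mB := mean_nat (pem p00 p10 1 0)).
  set (D0 := sum_f_R0 (fun y => Ml r q 0 y * mpow r (Mmat r q) d y 0) r).
  set (W := sum_f_R0 (fun y => Ml r q 0 y *
              sum_f_R0 (fun z => mpow r (Mmat r q) d y z * q z O) r) r).
  assert (Hcross : cross_term d = mB * W + (mA - mB) * (D0 * q O O)).
  { unfold cross_term, W, D0.
    rewrite (sum_ext _ (fun y => mB * (Ml r q 0 y * sum_f_R0 (fun z => mpow r (Mmat r q) d y z * q z O) r)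
        + (mA - mB) * q O O * (Ml r q 0 y * mpow r (Mmat r q) d y 0))).
    - rewrite sum_plus, !sum_scal_l. ring.
    - intro y. rewrite (sum_ext _ (fun z => mB * (mpow r (Mmat r q) d y z * q z O)
          + kd z 0 * ((mA - mB) * (mpow r (Mmat r q) d y z * q z O))))
        by (intro z; rewrite mean_split; fold mA mB; ring).
      rewrite sum_plus, sum_scal_l, sum_kd_pick by lia. ring. }
  unfold mu0, theta2. rewrite mpow_succ_00, mpow_succ_succ_00, Hcross. fold mA D0 W.
  rewrite theta1_split in Hth |- *. fold mA mB in Hth |- *.
  field. repeat split; lra.
Qed.

End HTMM.

Theorem mainTheorem5
  (r T : nat) (q : nat -> nat -> R) (p00 p10 : nat -> R) (nu : nat -> R)
  (hr : (1 <= r)%nat) (hT : (1 <= T)%nat)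
  (hq01 : forall x z, (x <= r)%nat -> (z <= r - 1)%nat -> 0 <= q x z <= 1)
  (hqsum : forall z, (z <= r - 1)%nat -> sum_f_R0 (fun x => q x z) r = 1)
  (hp00 : is_prob_nat p00) (hp10 : is_prob_nat p10)
  (hnu0 : forall x, (x <= r)%nat -> 0 <= nu x)
  (hnu1 : sum_f_R0 nu r = 1)
  (hq00 : 0 < q O O < 1)
  (htheta1 : 0 < theta1 r q p00 p10)
  (hmgf00 : finite_mgf_near0 p00) (hmgf10 : finite_mgf_near0 p10)
  (hdiag : diagonalizable r (Mmat r q)) :
  (forall t, (1 <= t <= T)%nat ->
     htmm_cov r T q p00 p10 nu t t =
     (theta1 r q p00 p10 * (theta3 r q p00 p10 + 1) + 1
        - htmm_mean r T q p00 p10 nu t) * htmm_mean r T q p00 p10 nu t) /\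
  (forall t t', (1 <= t')%nat -> (t' < t)%nat -> (t <= T)%nat ->
     htmm_cov r T q p00 p10 nu t t' =
     ((theta2 r q p00 p10
         - q O O * (1 - theta2 r q p00 p10) / (1 - q O O))
          * mu0 r q p00 p10 (t - t')
       + (1 - theta2 r q p00 p10) / (1 - q O O)
          * mu0 r q p00 p10 (t - t' + 1)
       - htmm_mean r T q p00 p10 nu t) * htmm_mean r T q p00 p10 nu t').
Proof.
  assert (Hmean : forall t, (1 <= t <= T)%nat ->
            htmm_mean r T q p00 p10 nu t = jump_prob r q nu (t - 1) * theta1 r q p00 p10)
    by (intros; apply htmm_mean_formula; auto).
  split.
  - intros t Ht. unfold htmm_cov.
    rewrite htmm_second_moment, Hmean by auto.
    unfold theta3, inner_var. field. lra.
  - intros t t' Ht' Htt Ht. unfold htmm_cov.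
    rewrite htmm_E_pair, (Hmean t') by (auto; lia).
    set (d := (t - t' - 1)%nat).
    replace (t - t')%nat with (S d) by (unfold d; lia).
    replace (S d + 1)%nat with (S (S d)) by lia.
    rewrite cross_term_mu0 by (auto; lra). ring.
Qed.
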